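(* Let $X=\{x_1,\dots,x_n\}$ be a finite biquandle and let $K_1,K_2$ be virtual knotoid diagrams. Then \[\mathcal{M}_X(K_1K_2)=\mathcal{M}_X(K_1)\,\mathcal{M}_X(K_2)\] (matrix product), where $\mathcal{M}_X(K)$ is the $n\times n$ matrix whose $(i,j)$-entry is the number of $X_{ij}$-colorings of $K$.
   Context: A virtual knotoid diagram is an immersed oriented open curve in $S^2$ (oriented from the tail endpoint to the head endpoint) with finitely many transversal double points, each a classical crossing (with over/under information) or a virtual crossing. Product: for virtual knotoid diagrams $K_1,K_2$ in $S^2$ with tails $t_1,t_2$ and heads $h_1,h_2$, let $U$ be a disk neighborhood of $h_1$ meeting $K_1$ in a radius and $V$ a disk neighborhood of $t_2$ meeting $K_2$ in a radius. $K_1K_2$ is obtained by gluing $S^2\setminus\mathrm{Int}(U)$ and $S^2\setminus\mathrm{Int}(V)$ along a homeomorphism $\partial U\to\partial V$ sending $K_1\cap\partial U$ to $K_2\cap\partial V$; it has tail $t_1$ and head $h_2$. A biquandle is a set $X$ with binary operations $\underline{\triangleright},\overline{\triangleright}$ such that for all $x,y,z$: $x\underline{\triangleright}x=x\overline{\triangleright}x$; the maps $x\mapsto x\overline{\triangleright}y$, $x\mapsto x\underline{\triangleright}y$ and $(x,y)\mapsto(y\overline{\triangleright}x,\,x\underline{\triangleright}y)$ are invertible; and $(x\underline{\triangleright}y)\underline{\triangleright}(z\underline{\triangleright}y)=(x\underline{\triangleright}z)\underline{\triangleright}(y\overline{\triangleright}z)$, $(x\underline{\triangleright}y)\overline{\triangleright}(z\underline{\triangleright}y)=(x\overline{\triangleright}z)\underline{\triangleright}(y\overline{\triangleright}z)$,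 $(x\overline{\triangleright}y)\overline{\triangleright}(z\overline{\triangleright}y)=(x\overline{\triangleright}z)\overline{\triangleright}(y\underline{\triangleright}z)$. Semi-arcs are the pieces into which crossings cut the curve; the tail (head) semi-arc contains the tail (head). An $X$-coloring assigns an element of $X$ to each semi-arc such that at each classical crossing, drawn with both strands oriented upward, incoming lower-left and lower-right colors $x,y$ give outgoing upper-left and upper-right colors $y\overline{\triangleright}x$ and $x\underline{\triangleright}y$, and at virtual crossings colors pass through unchanged. An $X_{ij}$-coloring is an $X$-coloring with tail semi-arc colored $x_i$ and head semi-arc colored $x_j$. *)

From mathcomp Require Import all_boot all_order all_algebra.
Set Implicit Arguments. Unset Strict Implicit. Unset Printing Implicit Defensive.
Import GRing.Theory.

(* [und x y] is x \underline{\triangleright} y, [ovr x y] is x \overline{\triangleright} y. *)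
Definition is_biquandle (X : Type) (und ovr : X -> X -> X) : Prop :=
  [/\ (forall x, und x x = ovr x x),
      (forall y, bijective (fun x => ovr x y)),
      (forall y, bijective (fun x => und x y)),
      bijective (fun p : X * X => (ovr p.2 p.1, und p.1 p.2)) &
      (forall x y z,
         [/\ und (und x y) (und z y) = und (und x z) (ovr y z),
             ovr (und x y) (und z y) = und (ovr x z) (ovr y z) &
             ovr (ovr x y) (ovr z y) = ovr (ovr x z) (und y z)])].

(* Virtual crossings carry no information for colorings (colors pass
   through unchanged), so a virtual knotoid diagram is encoded by the
   sequence of classical crossing passages met when travelling from the
   tail to the head.  A passage is (label, left, over):
   - label : the classical crossing being passed;
   - left  : true iff, when the crossing is drawn with both strands
             oriented upward, this strand goes from lower-left to
             upper-right (false: from lower-right to upper-left);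
   - over  : true iff this passage is the over-strand. *)
Definition visit := (nat * bool * bool)%type.
Definition vlabel (v : visit) : nat := v.1.1.
Definition vleft (v : visit) : bool := v.1.2.
Definition vover (v : visit) : bool := v.2.

Definition v0 : visit := (0, false, false).

Definition gauss_wf (w : seq visit) : Prop :=
  (forall v, v \in w -> count (fun u => vlabel u == vlabel v) w = 2) /\
  (forall p q, p < size w -> q < size w -> p != q ->
     vlabel (nth v0 w p) = vlabel (nth v0 w q) ->
     vleft (nth v0 w p) != vleft (nth v0 w q) /\
     vover (nth v0 w p) != vover (nth v0 w q)).

(* Product K1 K2: glue the head of K1 to the tail of K2; the crossings of
   K2 are relabelled to be disjoint from those of K1. *)
Definition gshift (n : nat) (v : visit) : visit := (n + vlabel v, vleft v, vover v).
Definition gprod (w1 w2 : seq visit) : seq visit :=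
  w1 ++ map (gshift (\max_(v <- w1) vlabel v).+1) w2.

(* Semi-arcs of a code w are indexed by 0 .. size w: semi-arc k lies between
   passage k-1 and passage k; semi-arc 0 is the tail semi-arc and semi-arc
   (size w) the head semi-arc.  At a crossing with left passage p and right
   passage q, the incoming colors are x = col p (lower-left), y = col q
   (lower-right); the outgoing colors are col (q+1) = y ovr x (upper-left)
   and col (p+1) = x und y (upper-right). *)
Definition is_coloring (X : finType) (und ovr : X -> X -> X) (w : seq visit)
    (col : {ffun 'I_(size w).+1 -> X}) : bool :=
  [forall p : 'I_(size w), forall q : 'I_(size w),
     ((p != q) && (vlabel (nth v0 w p) == vlabel (nth v0 w q))
        && vleft (nth v0 w p)) ==>
     ((col (inord p.+1) == und (col (inord p)) (col (inord q))) &&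
      (col (inord q.+1) == ovr (col (inord q)) (col (inord p))))].

Definition ncol (X : finType) (und ovr : X -> X -> X) (w : seq visit)
    (i j : 'I_#|X|) : nat :=
  #|[set col : {ffun 'I_(size w).+1 -> X} |
      [&& is_coloring und ovr col, col ord0 == enum_val i
        & col ord_max == enum_val j]]|.

Definition colmx (X : finType) (und ovr : X -> X -> X) (w : seq visit)
  : 'M[nat]_#|X| := \matrix_(i, j) ncol und ovr w i j.

From mathcomp Require Import all_boot all_order all_algebra.
Set Implicit Arguments. Unset Strict Implicit. Unset Printing Implicit Defensive.

(* The head semi-arc of K1 and the tail semi-arc of K2 become one semi-arc of
   K1 K2, and the crossings of the two factors are disjoint.  Hence an
   X-coloring of K1 K2 whose glued semi-arc has color x is exactly a pair of
   an X-coloring of K1 ending in x and an X-coloring of K2 starting in x;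
   summing over x gives the (i, j) entry of the matrix product.  No biquandle
   axiom is needed for this count. *)

Section ProductCode.
Variables w1 w2 : seq visit.

Local Notation n1 := (size w1).
Local Notation n2 := (size w2).
Local Notation w := (gprod w1 w2).

Lemma size_gprod : size w = n1 + n2.
Proof. by rewrite size_cat size_map. Qed.

Lemma nth_gprodl p : p < n1 -> nth v0 w p = nth v0 w1 p.
Proof. by move=> lt_p; rewrite nth_cat lt_p. Qed.

Lemma vlabel_gprodr p : p < n2 ->
  vlabel (nth v0 w (n1 + p)) = (\max_(v <- w1) vlabel v).+1 + vlabel (nth v0 w2 p).
Proof. by move=> lt_p; rewrite nth_cat ltnNge leq_addr /= addKn (nth_map v0). Qed.

Lemma vleft_gprodr p : p < n2 -> vleft (nth v0 w (n1 + p)) = vleft (nth v0 w2 p).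
Proof. by move=> lt_p; rewrite nth_cat ltnNge leq_addr /= addKn (nth_map v0). Qed.

Lemma gprod_labels_disjoint p q : p < n1 -> q < n2 ->
  vlabel (nth v0 w p) != vlabel (nth v0 w (n1 + q)).
Proof.
move=> lt_p lt_q; rewrite nth_gprodl // vlabel_gprodr // neq_ltn; apply/orP; left.
rewrite ltnS (leq_trans _ (leq_addr _ _)) //.
exact: (leq_bigmax_seq (P := predT)) (mem_nth v0 lt_p) _.
Qed.

End ProductCode.

Lemma ltn_add_cases m n p : p < m + n -> p < m \/ exists2 q, q < n & p = m + q.
Proof.
case: (ltnP p m) => [|le_mp lt_p]; first by left.
by right; exists (p - m); rewrite ?subnKC // -(ltn_add2l m) subnKC.
Qed.

Section Colorings.
Variables (X : finType) (und ovr : X -> X -> X).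

Definition coloring (w : seq visit) (f : nat -> X) : Prop :=
  forall p q, p < size w -> q < size w -> p != q ->
  vlabel (nth v0 w p) = vlabel (nth v0 w q) -> vleft (nth v0 w p) ->
  f p.+1 = und (f p) (f q) /\ f q.+1 = ovr (f q) (f p).

Lemma coloring_eq_in w f g :
  (forall k, k <= size w -> f k = g k) -> coloring w f -> coloring w g.
Proof.
move=> fg col_f p q lt_p lt_q.
by rewrite -!fg ?(ltnW lt_p) ?(ltnW lt_q) //; apply: col_f.
Qed.

Lemma coloring_gprod w1 w2 f :
  coloring (gprod w1 w2) f <-> coloring w1 f /\ coloring w2 (fun k => f (size w1 + k)).
Proof.
have le_n1 k : k < size w1 -> k < size (gprod w1 w2).
  by rewrite size_gprod; apply: ltn_addr.
split=> [col_f|[col1 col2] p q].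
  split=> p q lt_p lt_q.
    by rewrite -!(@nth_gprodl w1 w2) //; apply: col_f; rewrite ?le_n1.
  move=> ne_pq eq_lab left_p; rewrite /= !addnS; apply: col_f.
  - by rewrite size_gprod ltn_add2l.
  - by rewrite size_gprod ltn_add2l.
  - by rewrite eqn_add2l.
  - by rewrite !vlabel_gprodr // eq_lab.
  - by rewrite vleft_gprodr.
rewrite size_gprod => /ltn_add_cases[lt_p|[p' lt_p ->]] /ltn_add_cases[lt_q|[q' lt_q ->]].
- by rewrite !nth_gprodl //; apply: col1.
- by move=> _ /eqP; rewrite (negbTE (gprod_labels_disjoint lt_p lt_q)).
- by move=> _ /esym/eqP; rewrite (negbTE (gprod_labels_disjoint lt_q lt_p)).
rewrite eqn_add2l !vlabel_gprodr // vleft_gprodr // -!addnS => ne_pq /addnI.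
exact: col2.
Qed.

Definition cval N (c : {ffun 'I_N.+1 -> X}) (k : nat) : X := c (inord k).

Lemma cvalE N (c : {ffun 'I_N.+1 -> X}) (k : 'I_N.+1) : c k = cval c k.
Proof. by rewrite /cval inord_val. Qed.

Lemma eq_cval N (c c' : {ffun 'I_N.+1 -> X}) :
  (forall k, k <= N -> cval c k = cval c' k) -> c = c'.
Proof. by move=> cc'; apply/ffunP => k; rewrite !cvalE cc' ?leq_ord. Qed.

Lemma is_coloringE w (col : {ffun 'I_(size w).+1 -> X}) :
  is_coloring und ovr col <-> coloring w (cval col).
Proof.
split=> [/forallP col_w p q lt_p lt_q ne_pq eq_lab left_p|col_w].
  have /forallP/(_ (Ordinal lt_q))/implyP := col_w (Ordinal lt_p).
  by rewrite /= ne_pq eq_lab eqxx left_p => /(_ isT) /andP[/eqP ? /eqP ?].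
apply/forallP => p; apply/forallP => q; apply/implyP => /andP[/andP[ne_pq /eqP eq_lab]].
by case/(col_w p q (ltn_ord p) (ltn_ord q) ne_pq eq_lab) => ? ?; apply/andP; split; apply/eqP.
Qed.

Definition colset w (a b : X) : {set {ffun 'I_(size w).+1 -> X}} :=
  [set col | [&& is_coloring und ovr col, col ord0 == a & col ord_max == b]].

Lemma mem_colset w a b col :
  col \in colset w a b <-> [/\ coloring w (cval col), cval col 0 = a & cval col (size w) = b].
Proof.
rewrite inE (cvalE col ord0) (cvalE col ord_max).
split=> [/and3P[/is_coloringE ? /eqP ? /eqP ?] //|[/is_coloringE -> -> ->]].
by rewrite !eqxx.
Qed.

Section Gluing.
Variables n1 n2 N : nat.
Hypothesis n1n2 : N = n1 + n2.

Definition lpart (c : {ffun 'I_N.+1 -> X}) : {ffun 'I_n1.+1 -> X} :=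
  [ffun k : 'I_n1.+1 => cval c k].
Definition rpart (c : {ffun 'I_N.+1 -> X}) : {ffun 'I_n2.+1 -> X} :=
  [ffun k : 'I_n2.+1 => cval c (n1 + k)].
Definition glue (c1 : {ffun 'I_n1.+1 -> X}) (c2 : {ffun 'I_n2.+1 -> X})
  : {ffun 'I_N.+1 -> X} :=
  [ffun k : 'I_N.+1 => if k <= n1 then cval c1 k else cval c2 (k - n1)].

Lemma cval_lpart c k : k <= n1 -> cval (lpart c) k = cval c k.
Proof. by move=> le_k; rewrite /cval ffunE inordK. Qed.

Lemma cval_rpart c k : k <= n2 -> cval (rpart c) k = cval c (n1 + k).
Proof. by move=> le_k; rewrite /cval ffunE inordK. Qed.

Lemma cval_gluel c1 c2 k : k <= n1 -> cval (glue c1 c2) k = cval c1 k.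
Proof.
by move=> le_k; rewrite /cval ffunE inordK ?le_k // ltnS n1n2 (leq_trans le_k) ?leq_addr.
Qed.

Lemma cval_gluer c1 c2 k : cval c1 n1 = cval c2 0 -> k <= n2 ->
  cval (glue c1 c2) (n1 + k) = cval c2 k.
Proof.
move=> junction le_k; rewrite /cval ffunE inordK ?ltnS ?n1n2 ?leq_add2l // addKn.
by case: ifP => //; case: k le_k => [|k] _; rewrite ?addn0 // addnS ltnNge leq_addr.
Qed.

Lemma glueK c : glue (lpart c) (rpart c) = c.
Proof.
apply: eq_cval => k le_k; have [le_kn1|lt_n1k] := leqP k n1.
  by rewrite cval_gluel ?cval_lpart.
have le_kn2 : k - n1 <= n2 by rewrite leq_subLR -n1n2.
rewrite -(subnKC (ltnW lt_n1k)) cval_gluer ?cval_rpart ?cval_lpart ?addn0 //.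
Qed.

Lemma lpart_glue c1 c2 : lpart (glue c1 c2) = c1.
Proof. by apply: eq_cval => k le_k; rewrite cval_lpart ?cval_gluel. Qed.

Lemma rpart_glue c1 c2 : cval c1 n1 = cval c2 0 -> rpart (glue c1 c2) = c2.
Proof. by move=> junction; apply: eq_cval => k le_k; rewrite cval_rpart ?cval_gluer. Qed.

End Gluing.

Arguments lpart n1 {N} c.
Arguments rpart n1 n2 {N} c.
Arguments glue n1 n2 N c1 c2 : clear implicits.

Section ProductColorings.
Variables (w1 w2 : seq visit).

Local Notation n1 := (size w1).
Local Notation n2 := (size w2).
Local Notation N := (size (gprod w1 w2)).

Lemma lpart_rpart_colset a b x c : c \in colset (gprod w1 w2) a b -> cval c n1 = x ->
  (lpart n1 c \in colset w1 a x) && (rpart n1 n2 c \in colset w2 x b).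
Proof.
have n1n2 := size_gprod w1 w2.
case/mem_colset => /coloring_gprod[col1 col2] c0 cN cx.
apply/andP; split; apply/mem_colset; split.
- by apply: coloring_eq_in col1 => k le_k; rewrite cval_lpart.
- by rewrite cval_lpart.
- by rewrite cval_lpart.
- by apply: coloring_eq_in col2 => k le_k; rewrite cval_rpart.
- by rewrite cval_rpart ?addn0.
- by rewrite cval_rpart // -n1n2.
Qed.

Lemma glue_colset a b x c1 c2 : c1 \in colset w1 a x -> c2 \in colset w2 x b ->
  glue n1 n2 N c1 c2 \in colset (gprod w1 w2) a b.
Proof.
have n1n2 := size_gprod w1 w2.
case/mem_colset => col1 c10 c1x /mem_colset[col2 c20 c2b].
have junction : cval c1 n1 = cval c2 0 by rewrite c1x c20.
apply/mem_colset; split.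
- apply/coloring_gprod; split.
    by apply: coloring_eq_in col1 => k le_k; rewrite cval_gluel.
  by apply: coloring_eq_in col2 => k le_k; rewrite cval_gluer.
- by rewrite cval_gluel.
- by rewrite n1n2 cval_gluer.
Qed.

Lemma card_colset_gprod a b :
  #|colset (gprod w1 w2) a b| = \sum_(x : X) #|colset w1 a x| * #|colset w2 x b|.
Proof.
have n1n2 := size_gprod w1 w2.
rewrite -sum1_card (partition_big (fun c => cval c n1) predT) //=.
apply: eq_bigr => x _; rewrite sum1dep_card -cardsX.
pose parts (c : {ffun 'I_N.+1 -> X}) := (lpart n1 c, rpart n1 n2 c).
have parts_inj : injective parts.
  by apply: (can_inj (g := fun p => glue n1 n2 N p.1 p.2)) => c; apply: glueK.
rewrite -(card_imset _ parts_inj); apply: eq_card => -[c1 c2].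
rewrite in_setX; apply/imsetP/idP => [[c]|/andP[col1 col2]].
  by rewrite inE => /andP[col_c /eqP cx] [-> ->]; apply: lpart_rpart_colset.
have /mem_colset[_ _ c1x] := col1; have /mem_colset[_ c20 _] := col2.
exists (glue n1 n2 N c1 c2); last by rewrite /parts lpart_glue ?rpart_glue ?c1x ?c20.
by rewrite inE (glue_colset col1 col2) cval_gluel /= ?c1x.
Qed.

End ProductColorings.

End Colorings.

Theorem mainTheorem5 (X : finType) (und ovr : X -> X -> X) (w1 w2 : seq visit) :
  is_biquandle und ovr -> gauss_wf w1 -> gauss_wf w2 ->
  colmx und ovr (gprod w1 w2) = (colmx und ovr w1 *m colmx und ovr w2)%R.
Proof.
move=> _ _ _; apply/matrixP => i j; rewrite !mxE [LHS]card_colset_gprod.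
rewrite (reindex (@enum_val X predT)) /=; last exact/onW_bij/enum_val_bij.
by apply: eq_bigr => k _; rewrite !mxE.
Qed.
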